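(* Let $n\ge 1$, $\rho\in(0,1)$, $\alpha\ge 0$, and let $F:\mathbb{R}^n\to\mathbb{R}^n$ be $\rho$-Lipschitz with $F(x)=Gx+\xi(x)$, where $G\in\mathbb{R}^{n\times n}$ is symmetric positive semidefinite with $G\preccurlyeq\rho I$ and $\xi:\mathbb{R}^n\to\mathbb{R}^n$ is $\alpha$-Lipschitz. Let $C\ge1$, $k\ge1$ an integer, $x_0\in\mathbb{R}^n$, $\varepsilon>0$. Let $x_{i+1}=F(x_i)$ for $i=0,\dots,k$, $R=[x_0-x_1,\dots,x_k-x_{k+1}]$, and suppose $\tilde c\in\mathbb{R}^{k+1}$ satisfies $\mathbf 1^T\tilde c=1$, $\|\tilde c\|_1\le C$ and $$\|R\tilde c\|\le \min\{\|Rc\|:\mathbf 1^Tc=1,\ \|c\|_1\le C\}+\varepsilon\|F(x_0)-x_0\|.$$ Let $x_e=\sum_{i=0}^k\tilde c_ix_i$. Then $$\|F(x_e)-x_e\|\le\Big(\max_{x\in[0,\rho]}|p_*(x)|+3C\alpha k+\varepsilon\Big)\|F(x_0)-x_0\|,$$ where $p_*$ is any minimizer of $\max_{x\in[0,\rho]}|p(x)|$ over $p\in\mathbb{R}_k[X]$ with $p(1)=1$, $\|p\|_1\le C$.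
   Context: $\|\cdot\|$ is the Euclidean norm. $\mathbb{R}_k[X]$ is the space of real polynomials of degree at most $k$; $\|p\|_1$ is the sum of the absolute values of the coefficients of $p$, and $\|c\|_1=\sum_i|c_i|$ for vectors. *)

From HB Require Import structures.
From mathcomp Require Import all_boot all_order all_algebra.
From mathcomp Require Import all_classical all_reals.
Set Implicit Arguments. Unset Strict Implicit. Unset Printing Implicit Defensive.
Import Order.TTheory GRing.Theory Num.Theory.
Local Open Scope ring_scope.
Local Open Scope classical_set_scope.

Definition enorm (R : realType) (n : nat) (v : 'cV[R]_n) : R :=
  Num.sqrt (\sum_(i < n) (v i 0) ^+ 2).

Definition l1norm (R : realType) (m : nat) (c : 'cV[R]_m) : R :=
  \sum_(i < m) `|c i 0|.

Definition poly_l1 (R : realType) (p : {poly R}) : R :=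
  \sum_(i < size p) `|p`_i|.

(* max_{x in [0, rho]} |p(x)|  (the sup is attained: p is continuous) *)
Definition supabs (R : realType) (rho : R) (p : {poly R}) : R :=
  sup [set `|p.[x]| | x in [set x : R | 0 <= x <= rho]].

Definition lipschitz (R : realType) (n : nat) (L : R) (f : 'cV[R]_n -> 'cV[R]_n) :=
  forall x y, enorm (f x - f y) <= L * enorm (x - y).

Definition feasible_poly (R : realType) (k : nat) (C : R) (p : {poly R}) :=
  (size p <= k.+1)%N /\ p.[1] = 1 /\ poly_l1 p <= C.

(* residual matrix applied to c: R c = sum_i c_i (x_i - x_{i+1}), x_i = F^i x0 *)
Definition resid (R : realType) (n k : nat) (F : 'cV[R]_n -> 'cV[R]_n)
  (x0 : 'cV[R]_n) (c : 'cV[R]_k.+1) : 'cV[R]_n :=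
  \sum_(i < k.+1) c i 0 *: (iter i F x0 - iter i.+1 F x0).

From HB Require Import structures.
From mathcomp Require Import all_boot all_order all_algebra.
From mathcomp Require Import all_classical all_reals.
From mathcomp Require Import complex.
From mathcomp Require Import ring lra.
Set Implicit Arguments. Unset Strict Implicit. Unset Printing Implicit Defensive.
Import Order.TTheory GRing.Theory Num.Theory.
Local Open Scope ring_scope.

(* Write d_i = x_(i+1) - x_i, so that R c = - sum_i c_i d_i.  As G is nonexpansive and xi is
   alpha-Lipschitz, d_i agrees with G^i d_0 up to an error i alpha ||d_0||; hence the coefficient
   vector of p_* is admissible and ||R p_*|| <= ||p_*(G) d_0|| + C k alpha ||d_0||.  Diagonalising
   the real symmetric G by a unitary matrix over R[i] gives ||p(G) v|| <= max_[0, rho] |p| ||v||,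
   its eigenvalues being Rayleigh quotients, hence in [0, rho].  Finally
   F x_e - x_e = xi(x_e) - sum_i c~_i xi(x_i) - R c~, and the xi-term is at most 2 C k alpha ||d_0||
   because all iterates stay within k ||d_0|| of x_0. *)

Section PolyCoefficients.
Variable R : realType.
Implicit Types (p : {poly R}) (k : nat).

Lemma poly_wide k p : (size p <= k)%N -> p = \sum_(i < k) p`_i *: 'X^i.
Proof.
move=> p_size; rewrite -poly_def; apply/polyP => j; rewrite coef_poly.
by case: ltnP => // k_le_j; rewrite nth_default // (leq_trans p_size).
Qed.

Lemma horner_mx_coef_wide n (A : 'M[R]_n.+1) k p : (size p <= k)%N ->
  horner_mx A p = \sum_(i < k) p`_i *: A ^+ i.
Proof.
move=> /poly_wide {1}->; rewrite rmorph_sum /=; apply: eq_bigr => i _.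
by rewrite horner_mxZ rmorphXn /= horner_mx_X.
Qed.

Lemma sum_coef_col k p : (size p <= k)%N ->
  \sum_(i < k) (\col_(j < k) p`_j) i 0 = p.[1].
Proof.
move=> /horner_coef_wide ->; apply: eq_bigr => i _.
by rewrite mxE expr1n mulr1.
Qed.

Lemma l1norm_coef_col k p : (size p <= k)%N ->
  l1norm (\col_(j < k) p`_j) = poly_l1 p.
Proof.
move=> p_size; rewrite /poly_l1 (big_ord_widen _ (fun i => `|p`_i|) p_size) big_mkcond.
apply: eq_bigr => i _; rewrite mxE; case: ltnP => // size_le_i.
by rewrite nth_default ?normr0.
Qed.

Lemma horner_norm_le_l1 p x : `|x| <= 1 -> `|p.[x]| <= poly_l1 p.
Proof.
move=> x_le1; rewrite horner_coef /poly_l1.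
apply: le_trans (ler_norm_sum _ _ _) (ler_sum _ _) => i _.
by rewrite normrM normrX ler_piMr // exprn_ile1.
Qed.

Lemma ler_supabs rho p x : rho <= 1 -> 0 <= x <= rho -> `|p.[x]| <= supabs rho p.
Proof.
move=> rho_le1 x_range; apply: sup_upper_bound; last by exists x.
split; first by exists `|p.[x]|, x.
exists (poly_l1 p) => _ [y /andP[y_ge0 y_le] <-]; apply: horner_norm_le_l1.
by rewrite ger0_norm // (le_trans y_le).
Qed.

End PolyCoefficients.

Section ComplexNorm.
Variable R : realType.
Local Notation C := R[i].
Local Notation phi := (real_complex R).
Local Open Scope sesquilinear_scope.

Lemma phi_real (x : R) : phi x \is Num.real.
Proof. by apply/complex_realP; exists x. Qed.

Definition cnorm n (y : 'cV[C]_n) : C := sqrtC (\sum_i `|y i 0| ^+ 2).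

Lemma sum_normCK_col n (y : 'cV[C]_n) : \sum_i `|y i 0| ^+ 2 = (y ^t* *m y) 0 0.
Proof. by rewrite mxE; apply: eq_bigr => i _; rewrite !mxE normCKC. Qed.

Lemma sum_normCK_row n (y : 'cV[C]_n) : \sum_i `|y i 0| ^+ 2 = dotmx y^T y^T.
Proof. by rewrite dotmxE mxE; apply: eq_bigr => i _; rewrite !mxE normCK. Qed.

Lemma cnorm_real n (v : 'cV[R]_n) : cnorm (map_mx phi v) = phi (enorm v).
Proof.
have s_ge0 : 0 <= \sum_i v i 0 ^+ 2 by rewrite sumr_ge0 // => i _; rewrite sqr_ge0.
rewrite /cnorm /enorm (eq_bigr (fun i => phi (v i 0 ^+ 2))); last first.
  by move=> i _; rewrite mxE normCK conj_Creal ?phi_real ?rmorphXn.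
by rewrite -rmorph_sum -{1}(sqr_sqrtr s_ge0) rmorphXn sqrCK // ler0c sqrtr_ge0.
Qed.

Lemma cnormD n (y z : 'cV[C]_n) : cnorm (y + z) <= cnorm y + cnorm z.
Proof.
rewrite /cnorm !sum_normCK_row linearD.
exact: (@triangle_lerif _ _ (@dotmx _ n) _ _).1.
Qed.

Lemma cnorm_unitary n (P : 'M[C]_n) (y : 'cV[C]_n) :
  P \is unitarymx -> cnorm (P ^t* *m y) = cnorm y.
Proof.
move=> /unitarymxP P_unitary; rewrite /cnorm !sum_normCK_col.
by rewrite trmx_mul map_mxM trmxCK mulmxA -(mulmxA _ P) P_unitary mulmx1.
Qed.

Lemma cnorm_diag_le n (d : 'rV[C]_n) (y : 'cV[C]_n) (M : C) :
  0 <= M -> (forall i, `|d 0 i| <= M) -> cnorm (diag_mx d *m y) <= M * cnorm y.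
Proof.
move=> M_ge0 d_le; have sum_ge0 (z : 'cV[C]_n) : 0 <= \sum_i `|z i 0| ^+ 2.
  by apply: sumr_ge0 => i _; rewrite exprn_ge0.
rewrite /cnorm -(sqrCK M_ge0) -sqrtCM ?nnegrE ?exprn_ge0 //.
rewrite ler_sqrtC ?nnegrE ?mulr_ge0 ?exprn_ge0 // mulr_sumr; apply: ler_sum => i _.
by rewrite mul_diag_mx mxE normrM exprMn ler_wpM2r ?exprn_ge0 // lerXn2r ?nnegrE.
Qed.

End ComplexNorm.

Section EuclideanNorm.
Variables (R : realType) (n : nat).
Implicit Types (u v : 'cV[R]_n) (a : R).

Lemma enorm_ge0 v : 0 <= enorm v.
Proof. exact: sqrtr_ge0. Qed.

Lemma enorm0 : enorm (0 : 'cV[R]_n) = 0.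
Proof. by rewrite /enorm big1 ?sqrtr0 // => i _; rewrite mxE expr0n. Qed.

Lemma enormZ a v : enorm (a *: v) = `|a| * enorm v.
Proof.
rewrite /enorm -sqrtr_sqr -sqrtrM ?sqr_ge0 // mulr_sumr.
by congr Num.sqrt; apply: eq_bigr => i _; rewrite mxE exprMn.
Qed.

Lemma enormN v : enorm (- v) = enorm v.
Proof. by rewrite -scaleN1r enormZ normrN1 mul1r. Qed.

Lemma enormD u v : enorm (u + v) <= enorm u + enorm v.
Proof. by rewrite -lecR rmorphD /= -!cnorm_real map_mxD cnormD. Qed.

Lemma enormB u v : enorm (u - v) <= enorm u + enorm v.
Proof. by rewrite -(enormN v) enormD. Qed.

Lemma enorm_sum (I : Type) (r : seq I) (P : pred I) (f : I -> 'cV[R]_n) :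
  enorm (\sum_(i <- r | P i) f i) <= \sum_(i <- r | P i) enorm (f i).
Proof.
apply: (big_ind2 (fun v a => enorm v <= a)); rewrite ?enorm0 //.
by move=> u1 u2 a1 a2 h1 h2; apply: le_trans (enormD _ _) (lerD h1 h2).
Qed.

Lemma enorm_wsum_le k (c : 'cV[R]_k) (f : 'I_k -> 'cV[R]_n) (B : R) :
  (forall i, enorm (f i) <= B) -> enorm (\sum_i c i 0 *: f i) <= l1norm c * B.
Proof.
move=> f_le; apply: le_trans (enorm_sum _ _ _) _.
by rewrite /l1norm mulr_suml; apply: ler_sum => i _; rewrite enormZ ler_wpM2l.
Qed.

Lemma affine_sumB k (c : 'cV[R]_k) (f : 'I_k -> 'cV[R]_n) v :
  \sum_i c i 0 = 1 -> \sum_i c i 0 *: f i - v = \sum_i c i 0 *: (f i - v).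
Proof.
move=> c_sum; rewrite -{1}[v]scale1r -c_sum scaler_suml -sumrB.
by apply: eq_bigr => i _; rewrite scalerBr.
Qed.

End EuclideanNorm.

Section RealSymmetric.
Variable R : realType.
Local Notation C := R[i].
Local Notation phi := (real_complex R).
Local Open Scope sesquilinear_scope.
Local Notation Remx u := (map_mx (@complex.Re R) u).
Local Notation Immx u := (map_mx (@complex.Im R) u).

Lemma quad_form_realmx m (S : 'M[R]_m) (u : 'rV[C]_m) : S^T = S ->
  (u *m map_mx phi S *m u ^t*) 0 0 =
  phi ((Remx u *m S *m (Remx u)^T) 0 0 + (Immx u *m S *m (Immx u)^T) 0 0).
Proof.
move=> S_sym; set a := Remx u; set b := Immx u.
have u_ReIm : u = map_mx phi a + 'i *: map_mx phi b.
  by apply/matrixP => i j; rewrite !mxE; exact: complexE.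
have u_conj : u ^t* = map_mx phi a^T - 'i *: map_mx phi b^T.
  apply/matrixP => i j; rewrite u_ReIm !mxE rmorphD rmorphM /= conjCi.
  by rewrite !conj_Creal ?phi_real // mulNr.
have ba_ab : b *m S *m a^T = a *m S *m b^T.
  have -> : b *m S *m a^T = (a *m S *m b^T)^T by rewrite !trmx_mul trmxK S_sym mulmxA.
  by apply/matrixP => i j; rewrite !ord1 mxE.
rewrite u_conj {1}u_ReIm !(mulmxDl, mulmxBr, mulmxDr).
rewrite -!scalemxAl -!scalemxAr -!map_mxM ba_ab !mxE rmorphD.
by rewrite mulrA -expr2 sqrCi mulN1r opprD opprK addrA addrK.
Qed.

Lemma row_conj_diag n (A B : 'M[C]_n) i :
  (A *m B *m A ^t*) i i = (row i A *m B *m (row i A) ^t*) 0 0.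
Proof. by rewrite -row_mul !mxE; apply: eq_bigr => j _; rewrite !mxE. Qed.

Variables (m : nat) (G : 'M[R]_m.+1) (rho : R).
Hypothesis G_sym : G^T = G.
Hypothesis G_psd : forall v : 'cV[R]_m.+1, 0 <= (v^T *m G *m v) 0 0.
Hypothesis G_le : forall v : 'cV[R]_m.+1, (v^T *m G *m v) 0 0 <= rho * (v^T *m v) 0 0.

Local Notation Gc := (map_mx phi G).
Local Notation P := (spectralmx Gc).

Lemma spectralmx_realsym : Gc = P ^t* *m diag_mx (spectral_diag Gc) *m P.
Proof.
have Gc_normal : Gc \is normalmx.
  apply: symmetric_normalmx.
    by apply/is_hermitianmxP; rewrite expr0 scale1r map_mx_id // map_trmx G_sym.
  by apply/mxOverP => i j; rewrite mxE phi_real.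
by rewrite -invmx_unitary ?spectral_unitarymx //; apply/orthomx_spectralP.
Qed.

Lemma spectral_diag_realsym i :
  exists2 r, spectral_diag Gc 0 i = phi r & 0 <= r <= rho.
Proof.
have PPt : P *m P ^t* = 1%:M := unitarymxP (spectral_unitarymx Gc).
have PGPt : P *m Gc *m P ^t* = diag_mx (spectral_diag Gc).
  move: spectralmx_realsym PPt; set d := spectral_diag _; set Q := spectralmx _.
  by move=> -> QQt; rewrite !mulmxA QQt mul1mx -mulmxA QQt mulmx1.
have := row_conj_diag P (map_mx phi 1%:M) i; have := row_conj_diag P Gc i.
rewrite !quad_form_realmx ?trmx1 // PGPt map_mx1 mulmx1 PPt.
rewrite [diag_mx _ i i]mxE [1%:M i i]mxE eqxx !mulr1n !mulmx1.
set a := Remx _; set b := Immx _ => -> ab1.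
exists ((a *m G *m a^T) 0 0 + (b *m G *m b^T) 0 0) => //.
have {}ab1 : (a *m a^T) 0 0 + (b *m b^T) 0 0 = 1 by apply: complexI; rewrite -ab1 rmorph1.
have := G_psd a^T; have := G_psd b^T; have := G_le a^T; have := G_le b^T.
rewrite !trmxK => a_le b_le b_ge0 a_ge0; rewrite addr_ge0 //=.
by rewrite -[rho]mulr1 -ab1 mulrDr lerD.
Qed.

Lemma horner_mx_enorm_le (p : {poly R}) (M : R) (v : 'cV[R]_m.+1) :
  0 <= M -> (forall x, 0 <= x <= rho -> `|p.[x]| <= M) ->
  enorm (horner_mx G p *m v) <= M * enorm v.
Proof.
move=> M_ge0 p_le; have P_unitary := spectral_unitarymx Gc.
rewrite -lecR rmorphM /= -!cnorm_real map_mxM map_horner_mx.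
rewrite {1}spectralmx_realsym -invmx_unitary // horner_mx_uconjC ?spectral_unit //.
rewrite horner_mx_diag invmx_unitary // -!mulmxA cnorm_unitary //.
apply: (@le_trans _ _ (phi M * cnorm (P *m map_mx phi v))); first apply: cnorm_diag_le.
- by rewrite ler0c.
- move=> i; rewrite mxE; have [r -> r_range] := spectral_diag_realsym i.
  by rewrite horner_map /= normc_def /= expr0n addr0 sqrtr_sqr lecR p_le.
by rewrite -[P in P *m _]trmxCK cnorm_unitary ?trmxC_unitary.
Qed.

End RealSymmetric.

Section Iterates.
Variables (R : realType) (n : nat) (F : 'cV[R]_n -> 'cV[R]_n) (x0 : 'cV[R]_n).
Local Notation x i := (iter i F x0).

Lemma enorm_iter_step_le L i : 0 <= L -> lipschitz L F ->
  enorm (x i.+1 - x i) <= L ^+ i * enorm (F x0 - x0).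
Proof.
move=> L_ge0 F_lip; elim: i => [|i IH]; first by rewrite mul1r.
by rewrite exprS -mulrA; apply: le_trans (F_lip _ _) (ler_wpM2l L_ge0 IH).
Qed.

Lemma enorm_iter_sub_le B j : (forall i, enorm (x i.+1 - x i) <= B) ->
  enorm (x j - x0) <= j%:R * B.
Proof.
move=> step_le; elim: j => [|j IH]; first by rewrite subrr enorm0 mul0r.
rewrite -(subrKA (x j)) -nat1r mulrDl mul1r.
by apply: le_trans (enormD _ _) (lerD (step_le j) IH).
Qed.

Lemma residE k (c : 'cV[R]_k.+1) : resid F x0 c = - \sum_i c i 0 *: (x i.+1 - x i).
Proof. by rewrite -sumrN; apply: eq_bigr => i _; rewrite -scalerN opprB. Qed.

End Iterates.

Section Linearization.
Variables (R : realType) (n : nat) (G : 'M[R]_n.+1) (xi F : 'cV[R]_n.+1 -> 'cV[R]_n.+1).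
Variables (alpha : R) (x0 : 'cV[R]_n.+1).
Hypothesis F_def : forall y, F y = G *m y + xi y.
Hypothesis xi_lip : lipschitz alpha xi.
Hypothesis alpha_ge0 : 0 <= alpha.
Local Notation x i := (iter i F x0).
Local Notation d i := (x i.+1 - x i).

Lemma enorm_step_linearization N i :
  (forall v, enorm (G *m v) <= enorm v) -> (forall i, enorm (d i) <= N) ->
  enorm (d i - G ^+ i *m d 0) <= alpha * (i%:R * N).
Proof.
move=> G_nonexp step_le; elim: i => [|i IH]; first by rewrite mul1mx subrr enorm0 mul0r mulr0.
have -> : d i.+1 - G ^+ i.+1 *m d 0 = G *m (d i - G ^+ i *m d 0) + (xi (x i.+1) - xi (x i)).
  have -> : d i.+1 = F (x i.+1) - F (x i) by [].
  by rewrite !F_def exprS -mulmxA opprD addrACA !mulmxBr [LHS]addrAC.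
rewrite -nat1r mulrDl mul1r mulrDr [leRHS]addrC.
apply: le_trans (enormD _ _) (lerD (le_trans (G_nonexp _) IH) _).
exact: le_trans (xi_lip _ _) (ler_wpM2l alpha_ge0 (step_le i)).
Qed.

Lemma enorm_resid_coef_le N k (p : {poly R}) :
  (size p <= k.+1)%N ->
  (forall v, enorm (G *m v) <= enorm v) -> (forall i, enorm (d i) <= N) ->
  enorm (resid F x0 (\col_(j < k.+1) p`_j)) <=
    enorm (horner_mx G p *m (F x0 - x0)) + poly_l1 p * (alpha * (k%:R * N)).
Proof.
move=> p_size G_nonexp step_le; rewrite residE enormN.
have -> : \sum_(i < k.+1) (\col_(j < k.+1) p`_j) i 0 *: d i =
    horner_mx G p *m d 0 + \sum_(i < k.+1) (\col_(j < k.+1) p`_j) i 0 *: (d i - G ^+ i *m d 0).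
  rewrite (horner_mx_coef_wide _ p_size) mulmx_suml -big_split; apply: eq_bigr => i _ /=.
  by rewrite mxE -scalemxAl -scalerDr subrKC.
apply: le_trans (enormD _ _) (lerD (lexx _) _).
rewrite -(l1norm_coef_col p_size); apply: enorm_wsum_le => i.
apply: le_trans (enorm_step_linearization _ G_nonexp step_le) _.
rewrite ler_wpM2l // ler_wpM2r ?(le_trans (enorm_ge0 _) (step_le 0)) //.
by rewrite ler_nat -ltnS.
Qed.

Section Extrapolation.
Variables (k : nat) (c : 'cV[R]_k.+1).
Local Notation xe := (\sum_(i < k.+1) c i 0 *: x i).

Lemma residual_extrapolation :
  F xe - xe = xi xe - \sum_(i < k.+1) c i 0 *: xi (x i) - resid F x0 c.
Proof.
have -> : resid F x0 c = xe - G *m xe - \sum_(i < k.+1) c i 0 *: xi (x i).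
  rewrite mulmx_sumr -!sumrB; apply: eq_bigr => i _.
  by rewrite [x i.+1]/= F_def -scalemxAr scalerBr scalerDr opprD addrA.
by rewrite F_def opprB subrKA opprB addrCA addrA.
Qed.

Hypotheses (c_sum : \sum_(i < k.+1) c i 0 = 1) (C : R) (c_l1 : l1norm c <= C).

Lemma enorm_xi_extrapolation_le N : (forall i, enorm (d i) <= N) ->
  enorm (xi xe - \sum_(i < k.+1) c i 0 *: xi (x i)) <= 2 * (C * (alpha * (k%:R * N))).
Proof.
move=> step_le; have N_ge0 := le_trans (enorm_ge0 _) (step_le 0).
have iter_le i : (i < k.+1)%N -> enorm (x i - x0) <= k%:R * N.
  move=> lt_ik; apply: le_trans (enorm_iter_sub_le _ step_le) _.
  by rewrite ler_wpM2r // ler_nat -ltnS.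
have xe_le : enorm (xe - x0) <= C * (k%:R * N).
  rewrite affine_sumB //; apply: le_trans (enorm_wsum_le _ (fun i => iter_le i (ltn_ord i))) _.
  by rewrite ler_wpM2r ?mulr_ge0.
have -> : xi xe - \sum_(i < k.+1) c i 0 *: xi (x i) =
    (xi xe - xi x0) - (\sum_(i < k.+1) c i 0 *: xi (x i) - xi x0).
  by rewrite opprB subrKA.
rewrite affine_sumB // mulr2n mulrDl mul1r; apply: le_trans (enormB _ _) (lerD _ _).
  by apply: le_trans (xi_lip _ _) _; rewrite mulrCA ler_wpM2l.
apply: le_trans (enorm_wsum_le _ (B := alpha * (k%:R * N)) _) _.
  by move=> i; apply: le_trans (xi_lip _ _) (ler_wpM2l alpha_ge0 (iter_le i (ltn_ord i))).
by rewrite ler_wpM2r ?mulr_ge0.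
Qed.

End Extrapolation.

End Linearization.

Unset Implicit Arguments.

Theorem corollary1 (R : realType) (n : nat) (rho alpha : R)
  (F xi : 'cV[R]_n -> 'cV[R]_n) (G : 'M[R]_n)
  (C : R) (k : nat) (x0 : 'cV[R]_n) (eps : R) (ct : 'cV[R]_k.+1)
  (pstar : {poly R}) :
  (1 <= n)%N -> 0 < rho < 1 -> 0 <= alpha ->
  lipschitz rho F ->
  (forall x, F x = G *m x + xi x) ->
  G^T = G ->
  (forall v : 'cV[R]_n, 0 <= (v^T *m G *m v) 0 0) ->
  (forall v : 'cV[R]_n, (v^T *m G *m v) 0 0 <= rho * (v^T *m v) 0 0) ->
  lipschitz alpha xi ->
  1 <= C -> (1 <= k)%N -> 0 < eps ->
  \sum_(i < k.+1) ct i 0 = 1 ->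
  l1norm ct <= C ->
  (forall c : 'cV[R]_k.+1, \sum_(i < k.+1) c i 0 = 1 -> l1norm c <= C ->
     enorm (resid F x0 ct) <= enorm (resid F x0 c) + eps * enorm (F x0 - x0)) ->
  feasible_poly k C pstar ->
  (forall q : {poly R}, feasible_poly k C q -> supabs rho pstar <= supabs rho q) ->
  let xe := \sum_(i < k.+1) ct i 0 *: iter i F x0 in
  enorm (F xe - xe) <=
    (supabs rho pstar + 3 * C * alpha * k%:R + eps) * enorm (F x0 - x0).
Proof.
case: n F xi G x0 => [//|m] F xi G x0 _ /andP[rho_gt0 rho_lt1] alpha_ge0 F_lip F_def.
move=> G_sym G_psd G_le xi_lip _ _ _ ct_sum ct_l1 ct_opt [p_size [p_1 p_l1]] _.
cbv zeta; set xe := \sum_(i < k.+1) _ *: _.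
set N := enorm (F x0 - x0); set S := supabs rho pstar.
have G_nonexp v : enorm (G *m v) <= enorm v.
  rewrite -[G in G *m v]horner_mx_X -[enorm v]mul1r.
  apply: (horner_mx_enorm_le G_sym G_psd G_le) => // y /andP[y_ge0 y_le].
  by rewrite hornerX ger0_norm // ltW // (le_lt_trans y_le).
have step_le i : enorm (iter i.+1 F x0 - iter i F x0) <= N.
  apply: le_trans (enorm_iter_step_le x0 i (ltW rho_gt0) F_lip) _.
  by rewrite ler_piMl ?enorm_ge0 // exprn_ile1 ?ltW.
have pG_le : enorm (horner_mx G pstar *m (F x0 - x0)) <= S * N.
  have S_ge0 : 0 <= S.
    by apply: le_trans (normr_ge0 pstar.[0]) (ler_supabs _ (ltW rho_lt1) _); rewrite lexx ltW.
  apply: (horner_mx_enorm_le G_sym G_psd G_le _ S_ge0) => y.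
  exact: ler_supabs (ltW rho_lt1).
have resid_p_le := enorm_resid_coef_le F_def xi_lip alpha_ge0 p_size G_nonexp step_le.
have resid_ct_le :
    enorm (resid F x0 ct) <= enorm (resid F x0 (\col_(j < k.+1) pstar`_j)) + eps * N.
  by apply: ct_opt; rewrite ?sum_coef_col ?l1norm_coef_col.
have xi_le := enorm_xi_extrapolation_le xi_lip alpha_ge0 ct_sum ct_l1 step_le.
have p_l1_le : poly_l1 pstar * (alpha * (k%:R * N)) <= C * (alpha * (k%:R * N)).
  by rewrite ler_wpM2r ?mulr_ge0 ?enorm_ge0.
rewrite (residual_extrapolation x0 F_def); apply: le_trans (enormB _ _) _.
have -> : (S + 3 * C * alpha * k%:R + eps) * N = S * N + 3 * (C * (alpha * (k%:R * N))) + eps * N.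
  by ring.
lra.
Qed.
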